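(* Let $L$ be a finite-dimensional Lie algebra over a field $F$ and let $S$ and $T$ be subalgebras of $L$ which are nil on $L$. Assume that $[S,T]\subseteq T$. Then $S+T$ is nil on $L$.
   Context: A subalgebra $S$ of $L$ is nil on $L$ if $\mathrm{ad}_L x$ is nilpotent for every $x\in S$. *)

(* A finite-dimensional Lie algebra over a field F is
   modelled as a finite-dimensional F-vector space L (a vectType F) together
   with a Lie bracket br : L -> L -> L (bilinear, alternating, Jacobi). *)
From HB Require Import structures.
From mathcomp Require Import all_boot all_order all_algebra.
Set Implicit Arguments. Unset Strict Implicit. Unset Printing Implicit Defensive.
Import GRing.Theory.
Local Open Scope ring_scope.

Definition lie_bracket (F : fieldType) (L : vectType F) (br : L -> L -> L) : Prop :=
  [/\ (forall (a : F) (x y z : L), br (a *: x + y) z = a *: br x z + br y z),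
      (forall (a : F) (x y z : L), br z (a *: x + y) = a *: br z x + br z y),
      (forall x : L, br x x = 0) &
      (forall x y z : L, br x (br y z) + br y (br z x) + br z (br x y) = 0)].

Definition ad (F : fieldType) (L : vectType F) (br : L -> L -> L) (x : L) : L -> L :=
  br x.

Definition ad_nilpotent (F : fieldType) (L : vectType F) (br : L -> L -> L) (x : L) : Prop :=
  exists n : nat, forall v : L, iter n (ad br x) v = 0.

Definition subalgebra (F : fieldType) (L : vectType F) (br : L -> L -> L)
  (S : {vspace L}) : Prop :=
  forall x y, x \in S -> y \in S -> br x y \in S.

Definition nil_on (F : fieldType) (L : vectType F) (br : L -> L -> L)
  (S : {vspace L}) : Prop :=
  forall x, x \in S -> ad_nilpotent br x.

Definition bracket_sub (F : fieldType) (L : vectType F) (br : L -> L -> L)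
  (S T U : {vspace L}) : Prop :=
  forall s t, s \in S -> t \in T -> br s t \in U.

(* Engel's argument, run relative to an s-stable flag.  A nil subalgebra K
   acting on K-stable subspaces V1 ⊄ V0 kills some w in V1 \ V0 modulo V0: grow a
   subalgebra of K one normalising element y at a time, and let the nilpotent
   ad y walk a vector killed by the smaller subalgebra until one more step
   would fall into V0.  The same walk with ad s, which normalises T, yields a
   vector killed modulo V0 by s and by T at once.  Adjoining such vectors one
   by one builds a flag 0 = V_0 ⊂ V_1 ⊂ ... ⊂ L with [s + t, V_(i+1)] ⊆ V_i,
   so ad (s + t) is nilpotent. *)
From mathcomp Require Import all_boot all_order all_algebra.
From mathcomp Require Import zify.
Set Implicit Arguments. Unset Strict Implicit. Unset Printing Implicit Defensive.
Import GRing.Theory.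
Local Open Scope ring_scope.

Lemma iter_exit (T : Type) (f : T -> T) (A : pred T) (Q : T -> Prop) n w :
  (forall v, Q v -> Q (f v)) -> Q w -> ~~ A w -> A (iter n f w) ->
  exists v, [/\ Q v, ~~ A v & A (f v)].
Proof.
move=> Qf; elim: n w => [|n IHn] w Qw Aw; first by rewrite /= (negbTE Aw).
rewrite iterSr; have [Afw _|Afw] := boolP (A (f w)); first by exists w.
exact: IHn (Qf w Qw) Afw.
Qed.

Lemma ltn_dim_addv_line (F : fieldType) (L : vectType F) (U : {vspace L}) v :
  v \notin U -> (\dim U < \dim (U + <[v]>))%N.
Proof.
move=> vU; rewrite (ltn_leqif (dimv_leqif_sup (addvSl U <[v]>))).
by apply: contra vU => /subvP; apply; apply: (subvP (addvSr U _)); apply: memv_line.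
Qed.

Section LieAlgebra.

Variables (F : fieldType) (L : vectType F) (br : L -> L -> L).
Hypothesis hL : lie_bracket br.

Lemma brDl x y z : br (x + y) z = br x z + br y z.
Proof. have [brl _ _ _] := hL. by rewrite -[x]scale1r brl !scale1r. Qed.

Lemma br0l z : br 0 z = 0.
Proof. by apply: (addrI (br 0 z)); rewrite -brDl !addr0. Qed.

Lemma brZl a x z : br (a *: x) z = a *: br x z.
Proof. have [brl _ _ _] := hL. by rewrite -[a *: x]addr0 brl br0l addr0. Qed.

Lemma brDr x y z : br z (x + y) = br z x + br z y.
Proof. have [_ brr _ _] := hL. by rewrite -[x]scale1r brr !scale1r. Qed.

Lemma br0r z : br z 0 = 0.
Proof. by apply: (addrI (br z 0)); rewrite -brDr !addr0. Qed.

Lemma brZr a x z : br z (a *: x) = a *: br z x.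
Proof. have [_ brr _ _] := hL. by rewrite -[a *: x]addr0 brr br0r addr0. Qed.

Lemma brNC x y : br x y = - br y x.
Proof.
have [_ _ brxx _] := hL.
apply/eqP; rewrite -addr_eq0.
by have := brxx (x + y); rewrite brDl !brDr !brxx add0r addr0 => /eqP.
Qed.

Lemma br_derivation m y v : br m (br y v) = br y (br m v) + br (br m y) v.
Proof.
have [_ _ _ jacobi] := hL.
have brNr u w : br u (- w) = - br u w by rewrite -scaleN1r brZr scaleN1r.
apply/eqP; rewrite -subr_eq0 opprD addrA -[X in _ == X](jacobi m y v).
by rewrite [br v m]brNC [br v (br m y)]brNC brNr.
Qed.

Lemma br_addv_linel (M V0 : {vspace L}) y w z :
  (forall m, m \in M -> br m w \in V0) -> br y w \in V0 ->
  z \in (M + <[y]>)%VS -> br z w \in V0.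
Proof.
move=> Mw yw /memv_addP[m mM [u /vlineP[a ->] ->]].
by rewrite brDl brZl rpredD ?rpredZ // Mw.
Qed.

Lemma br_addv_liner (V0 : {vspace L}) x w z :
  (forall v, v \in V0 -> br x v \in V0) -> br x w \in V0 ->
  z \in (V0 + <[w]>)%VS -> br x z \in V0.
Proof.
move=> xV0 xw /memv_addP[v vV0 [u /vlineP[a ->] ->]].
by rewrite brDr brZr rpredD ?rpredZ // xV0.
Qed.

Lemma subalgebra_addv_line (M : {vspace L}) y :
  subalgebra br M -> (forall m, m \in M -> br y m \in M) ->
  subalgebra br (M + <[y]>)%VS.
Proof.
move=> sM yM x z /memv_addP[m1 m1M [u1 /vlineP[a ->] ->]].
move=> /memv_addP[m2 m2M [u2 /vlineP[b ->] ->]].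
have [_ _ brxx _] := hL.
apply: (subvP (addvSl M _)).
rewrite !(brDl, brDr, brZl, brZr) brxx !scaler0 addr0 [br m1 y]brNC.
by rewrite !rpredD ?rpredZ ?rpredN ?yM ?sM.
Qed.

(* The vectors of V1 killed by M modulo V0 form an ad y-stable set when y
   normalises M, so ad y can be iterated on them until it lands in V0. *)
Lemma normalizer_null_vector (M V0 V1 : {vspace L}) y w0 :
  ad_nilpotent br y -> (forall m, m \in M -> br y m \in M) ->
  (forall v, v \in V0 -> br y v \in V0) -> (forall v, v \in V1 -> br y v \in V1) ->
  w0 \in V1 -> w0 \notin V0 -> (forall m, m \in M -> br m w0 \in V0) ->
  exists w, [/\ w \in V1, w \notin V0 & forall z, z \in (M + <[y]>)%VS -> br z w \in V0].
Proof.
move=> [n yn] yM yV0 yV1 w0V1 w0V0 Mw0.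
pose Q v := v \in V1 /\ forall m, m \in M -> br m v \in V0.
have Qy v : Q v -> Q (br y v).
  move=> [vV1 Mv]; split=> [|m mM]; first exact: yV1.
  by rewrite br_derivation rpredD ?yV0 ?Mv // brNC rpredN yM.
have [|w [[wV1 Mw] wV0 yw]] := @iter_exit _ (br y) (mem V0) Q n w0 Qy (conj w0V1 Mw0) w0V0.
  by rewrite /= [iter _ _ _]yn rpred0.
by exists w; split=> // z; apply: br_addv_linel.
Qed.

Lemma engel_null_vector (K V0 V1 : {vspace L}) :
  subalgebra br K -> nil_on br K -> bracket_sub br K V0 V0 -> bracket_sub br K V1 V1 ->
  ~~ (V1 <= V0)%VS ->
  exists w, [/\ w \in V1, w \notin V0 & forall k, k \in K -> br k w \in V0].
Proof.
have [d] := ubnP (\dim K); elim: d K V0 V1 => // d IHd K V0 V1 dimK sK nK KV0 KV1.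
case/subvPn=> w0 w0V1 w0V0.
suffices grow n (M : {vspace L}) : (\dim K - \dim M < n)%N -> (M <= K)%VS ->
    subalgebra br M ->
    (exists w, [/\ w \in V1, w \notin V0 & forall m, m \in M -> br m w \in V0]) ->
  exists w, [/\ w \in V1, w \notin V0 & forall k, k \in K -> br k w \in V0].
- apply: (grow _ 0%VS (ltnSn _)); rewrite ?sub0v //.
    by move=> x z; rewrite memv0 => /eqP-> _; rewrite br0l rpred0.
  by exists w0; split=> // m; rewrite memv0 => /eqP->; rewrite br0l rpred0.
elim: n M => // n IHn M dimM MK sM [w [wV1 wV0 Mw]].
have [KM | KM] := boolP (K <= M)%VS.
  by exists w; split=> // k /(subvP KM); apply: Mw.
have ltMK : (\dim M < \dim K)%N by rewrite (ltn_leqif (dimv_leqif_sup MK)).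
have dimMd : (\dim M < d)%N by rewrite (leq_trans ltMK).
have nM : nil_on br M by move=> m /(subvP MK); apply: nK.
have MKK : bracket_sub br M K K by move=> m k /(subvP MK) mK kK; apply: sK.
have [y [yK yM My]] := IHd M M K dimMd sM nM sM MKK KM.
have yNM m : m \in M -> br y m \in M by move=> mM; rewrite brNC rpredN My.
have [w' [w'V1 w'V0 Nw']] := normalizer_null_vector (nK y yK) yNM (KV0 y^~ yK)
  (KV1 y^~ yK) wV1 wV0 Mw.
have MyK : (M + <[y]> <= K)%VS by rewrite subv_add MK -memvE.
apply: (IHn (M + <[y]>)%VS) => //; last by exists w'.
- by have := ltn_dim_addv_line yM; have := dimvS MyK; lia.
- exact: subalgebra_addv_line.
Qed.

Lemma nil_on_of_null_vectors (N : {vspace L}) :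
  (forall V0 : {vspace L}, bracket_sub br N V0 V0 -> ~~ (fullv <= V0)%VS ->
     exists2 w, w \notin V0 & forall z, z \in N -> br z w \in V0) ->
  nil_on br N.
Proof.
move=> null_vector z zN.
suffices flag k (V0 : {vspace L}) : (\dim {:L} <= \dim V0 + k)%N ->
    bracket_sub br N V0 V0 -> exists n, forall v, iter n (br z) v \in V0.
  have [||n zn] := flag (\dim {:L}) 0%VS; rewrite ?dimv0 //.
    by move=> x v _; rewrite memv0 => /eqP->; rewrite br0r mem0v.
  by exists n => v; apply/eqP; rewrite -memv0.
elim: k V0 => [|k IHk] V0 dimV0 NV0; have [fullV0|nfullV0] := boolP (fullv <= V0)%VS;
  try by exists 0%N => v; apply: (subvP fullV0); apply: memvf.
  by rewrite -(geq_leqif (dimv_leqif_sup (subvf V0))) -[\dim V0]addn0 dimV0 in nfullV0.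
have [w wV0 Nw] := null_vector V0 NV0 nfullV0.
have [||n zn] := IHk (V0 + <[w]>)%VS.
- by have := ltn_dim_addv_line wV0; lia.
- move=> x v xN vV1; apply: (subvP (addvSl V0 _)).
  exact: br_addv_liner (NV0 x^~ xN) (Nw x xN) vV1.
exists n.+1 => v; rewrite iterS.
exact: br_addv_liner (NV0 z^~ zN) (Nw z zN) (zn v).
Qed.

End LieAlgebra.

Theorem lemma4p1 (F : fieldType) (L : vectType F) (br : L -> L -> L)
  (hL : lie_bracket br) (S T : {vspace L})
  (hS : subalgebra br S) (hT : subalgebra br T)
  (nS : nil_on br S) (nT : nil_on br T)
  (hST : bracket_sub br S T T) :
  nil_on br (S + T)%VS.
Proof.
move=> x /memv_addP[s sS [t tT ->]].
have sT t' : t' \in T -> br s t' \in T by apply: hST.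
have sTs : (s \in T + <[s]>)%VS by apply: (subvP (addvSr T _)); apply: memv_line.
apply: (nil_on_of_null_vectors hL (N := (T + <[s]>)%VS)); last first.
  by rewrite addrC memv_add ?memv_line.
move=> V0 NV0 nfullV0.
have TV0 : bracket_sub br T V0 V0 by move=> t' v /(subvP (addvSl T <[s]>)); apply: NV0.
have [w0 [_ w0V0 Tw0]] :=
  engel_null_vector hL hT nT TV0 (fun _ _ _ _ => memvf _) nfullV0.
have [w [_ wV0 Nw]] := normalizer_null_vector hL (nS s sS) sT (NV0 s^~ sTs)
  (fun v _ => memvf (br s v)) (memvf w0) w0V0 Tw0.
by exists w.
Qed.
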